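(* Let $r\in\mathbb{R}$, $b\in\mathbb{R}$, $\mu\in\mathbb{R}^N$, and let $\Sigma\in\mathbb{R}^{N\times N}$ be a symmetric positive definite matrix. Let $E:=\{x\in\mathbb{R}^N\setminus\{0\}: b-\mu^Tx>0\}$ and define $f(x):=\left(\frac{b-\mu^Tx}{\sqrt{x^T\Sigma x}}\right)^r$ on $E$. If $r=0$, then $f$ is locally concave on $E$. If $r\neq0$, then $\mathrm{sign}(-r)\cdot f$ is locally convex on $E$ if and only if for every $x\in E$ $$\mu^T\Sigma^{-1}\mu\le(2-r)\frac{(\mu^Tx)^2}{x^T\Sigma x}-2r\sqrt{\theta}\,\frac{\mu^Tx}{\sqrt{x^T\Sigma x}}-(r+1)\theta,\qquad \theta:=\frac{(b-\mu^Tx)^2}{x^T\Sigma x}.$$ Moreover, the function $x\mapsto\ln\frac{b-\mu^Tx}{\sqrt{x^T\Sigma x}}$ is locally concave on $E$ if and only if for every $x\in E$ $$\mu^T\Sigma^{-1}\mu\le 2\frac{(\mu^Tx)^2}{x^T\Sigma x}-\theta.$$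
   Context: A twice differentiable function is locally convex (resp. locally concave) on a set $A$ if its Hessian is positive semidefinite (resp. negative semidefinite) at every point of $A$. *)

From HB Require Import structures.
From mathcomp Require Import all_boot all_order all_algebra.
From mathcomp Require Import all_classical all_reals all_analysis.
Set Implicit Arguments. Unset Strict Implicit. Unset Printing Implicit Defensive.
Import Order.TTheory GRing.Theory Num.Theory.
Import numFieldNormedType.Exports.
Local Open Scope classical_set_scope.
Local Open Scope ring_scope.

(* Points of R^N are column vectors 'cV[R]_N; e_i = delta_mx i 0. *)
Definition qform (R : realType) (N : nat) (A : 'M[R]_N) (x : 'cV[R]_N) : R :=
  (x^T *m A *m x) 0 0.

Definition dotv (R : realType) (N : nat) (u x : 'cV[R]_N) : R :=
  (u^T *m x) 0 0.

Definition hessian (R : realType) (N : nat) (f : 'cV[R]_N -> R)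
    (x : 'cV[R]_N) : 'M[R]_N :=
  \matrix_(i < N, j < N) ('D_(delta_mx j 0) ('D_(delta_mx i 0) f) x).

Definition psd (R : realType) (N : nat) (H : 'M[R]_N) : Prop :=
  forall v : 'cV[R]_N, 0 <= qform H v.

Definition nsd (R : realType) (N : nat) (H : 'M[R]_N) : Prop :=
  forall v : 'cV[R]_N, qform H v <= 0.

Definition hess_locally_convex (R : realType) (N : nat) (f : 'cV[R]_N -> R)
    (A : set 'cV[R]_N) : Prop :=
  forall x, A x -> psd (hessian f x).

Definition hess_locally_concave (R : realType) (N : nat) (f : 'cV[R]_N -> R)
    (A : set 'cV[R]_N) : Prop :=
  forall x, A x -> nsd (hessian f x).

From HB Require Import structures.
From mathcomp Require Import all_boot all_order all_algebra.
From mathcomp Require Import all_classical all_reals all_analysis.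
From mathcomp Require Import ring lra.
Set Implicit Arguments. Unset Strict Implicit. Unset Printing Implicit Defensive.
Import Order.TTheory GRing.Theory Num.Theory.
Import numFieldNormedType.Exports.
Local Open Scope classical_set_scope.
Local Open Scope ring_scope.

(* Put g x := (b - mu^T x) / sqrt (x^T Sigma x) ([ratio]).  The functions under study are
   phi o g with phi t = sg(-r) t^r or phi = ln, and both satisfy t phi''(t) = (r - 1) phi'(t)
   (with r = 0 for ln).  By the second-order chain rule, the Hessian quadratic form of phi o g at x
   in direction v is then phi'(t) / (t x^T Sigma x) times
   [hess_form r t (mu^T v) (x^T Sigma v / sqrt (x^T Sigma x)) (v^T Sigma v)], where t = g x, and the
   sign of phi'(t) turns convexity, resp. concavity, into [hess_form <= 0] for every v.  As
   hess_form decreases in v^T Sigma v, it suffices to test it on the plane spanned by x and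
   Sigma^-1 mu, where it is a binary quadratic form; its nonpositivity is a discriminant condition,
   which is the stated inequality. *)

Section DirectionalCalculus.
Variables (R : realType) (V : normedModType R).
Implicit Types (F : V -> R) (x v : V).

Lemma derive_along_line F x v : 'D_v F x = 'D_1 (fun h : R => F (h *: v + x)) 0.
Proof.
rewrite /derive; set q1 := fun h => _; set q2 := fun h => _.
suff -> : q1 = q2 by [].
by apply/funext => h; rewrite /q1 /q2 /= scale0r add0r addr0 [_%:A]mulr1.
Qed.

Lemma is_derive_along_line F x v (d : R) :
  is_derive (0 : R) 1 (fun h : R => F (h *: v + x)) d -> is_derive x v F d.
Proof.
move=> [Fd <-]; split; first exact/derivable1P.
exact: derive_along_line.
Qed.

Lemma is_derive_quadratic_line F x v (c1 : R) :
  (exists c2, forall h, F (h *: v + x) = F x + h * c1 + h ^+ 2 * c2) ->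
  is_derive x v F c1.
Proof.
move=> [c2 Fq]; apply: is_derive_along_line.
have -> : (fun h : R => F (h *: v + x)) = cst (F x) + id * cst c1 + (id ^+ 2) * cst c2.
  by apply/funext => h; rewrite Fq.
have := is_deriveD (is_deriveD (is_derive_cst (F x) (0:R) 1)
  (is_deriveM (is_derive_id (0:R) 1) (is_derive_cst c1 (0:R) 1)))
  (is_deriveM (is_deriveX 2 (is_derive_id (0:R) 1)) (is_derive_cst c2 (0:R) 1)).
by move/is_derive_eq; apply; rewrite /cst /GRing.scale /=; ring.
Qed.

Lemma is_derive_comp F (phi : R -> R) x v (dF dphi : R) :
  is_derive x v F dF -> is_derive (F x) 1 phi dphi ->
  is_derive x v (phi \o F) (dphi * dF).
Proof.
move=> [DF <-] Dphi; apply: is_derive_along_line.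
have DFl : is_derive (0 : R) 1 (fun h : R => F (h *: v + x)) ('D_v F x).
  by apply: DeriveDef; [move/derivable1P: DF | rewrite derive_along_line].
have Dphi' : is_derive ((fun h : R => F (h *: v + x)) 0) 1 phi dphi.
  by rewrite /= scale0r add0r.
exact: (is_derive1_comp Dphi' DFl).
Qed.

Lemma is_derive_inv F x v (dF : R) : F x != 0 ->
  is_derive x v F dF -> is_derive x v (fun y => (F y)^-1) (- dF / F x ^+ 2).
Proof.
move=> Fx0 [DF <-]; apply: DeriveDef; first exact: derivableV.
by rewrite deriveV // /GRing.scale /= !mulNr mulrC.
Qed.

Lemma derive2_comp (g : V -> R) (Dg : V -> V -> R) (phi phi' : R -> R)
    (phi'' d2 : R) (x v w : V) :
  (\forall y \near x, (forall u, is_derive y u g (Dg y u)) /\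
                      is_derive (g y) 1 phi (phi' (g y))) ->
  is_derive (g x) 1 phi' phi'' -> is_derive x w (Dg ^~ v) d2 ->
  'D_w ('D_v (phi \o g)) x = phi'' * Dg x w * Dg x v + phi' (g x) * d2.
Proof.
move=> near_g Dphi' Dd1.
have D1 : \forall y \near x, 'D_v (phi \o g) y = ((phi' \o g) * Dg ^~ v) y.
  by apply: filterS near_g => y [Dg_y Dphi]; have [_ ->] := is_derive_comp (Dg_y v) Dphi.
have [Dg_x _] := nbhs_singleton near_g.
rewrite (near_eq_derive _ D1).
have [_ ->] := is_deriveM (is_derive_comp (Dg_x w) Dphi') Dd1.
by rewrite /GRing.scale /=; ring.
Qed.

End DirectionalCalculus.

Section BilinearForms.
Variables (R : realType) (N : nat).
Implicit Types (S : 'M[R]_N) (u v w x y : 'cV[R]_N).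

Definition bform S u v : R := (u^T *m S *m v) 0 0.

Lemma qformE S u : qform S u = bform S u u.
Proof. by []. Qed.

Lemma bformDl S u v w : bform S (u + v) w = bform S u w + bform S v w.
Proof. by rewrite /bform linearD !mulmxDl mxE. Qed.

Lemma bformDr S u v w : bform S u (v + w) = bform S u v + bform S u w.
Proof. by rewrite /bform mulmxDr mxE. Qed.

Lemma bformBl S u v w : bform S (u - v) w = bform S u w - bform S v w.
Proof. by rewrite /bform linearB /= !mulmxBl !mxE. Qed.

Lemma bformBr S u v w : bform S u (v - w) = bform S u v - bform S u w.
Proof. by rewrite /bform mulmxBr !mxE. Qed.

Lemma bformZl S a u v : bform S (a *: u) v = a * bform S u v.
Proof. by rewrite /bform linearZ -!scalemxAl mxE. Qed.

Lemma bformZr S a u v : bform S u (a *: v) = a * bform S u v.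
Proof. by rewrite /bform -scalemxAr mxE. Qed.

Lemma bformC S u v : S^T = S -> bform S u v = bform S v u.
Proof.
move=> S_sym; transitivity ((v^T *m S *m u)^T 0 0); last by rewrite mxE.
by rewrite !trmx_mul trmxK S_sym mulmxA.
Qed.

Lemma dotvDr u v w : dotv u (v + w) = dotv u v + dotv u w.
Proof. by rewrite /dotv mulmxDr mxE. Qed.

Lemma dotvBr u v w : dotv u (v - w) = dotv u v - dotv u w.
Proof. by rewrite /dotv mulmxBr !mxE. Qed.

Lemma dotvZr a u v : dotv u (a *: v) = a * dotv u v.
Proof. by rewrite /dotv -scalemxAr mxE. Qed.

Lemma qform_ge0 S : (forall x, x != 0 -> 0 < qform S x) -> forall v, 0 <= qform S v.
Proof.
move=> S_pd v; have [->|v0] := eqVneq v 0; last exact/ltW/S_pd.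
by rewrite /qform mulmx0 mxE.
Qed.

Lemma pd_unitmx S : (forall x, x != 0 -> 0 < qform S x) -> S \in unitmx.
Proof.
move=> S_pd; rewrite unitmxE unitfE; apply/negP => /det0P [w w0 wS].
have wT0 : w^T != 0 by rewrite -(inj_eq (@trmx_inj _ _ _)) trmxK trmx0.
by have := S_pd _ wT0; rewrite /qform trmxK wS mul0mx mxE ltxx.
Qed.

Lemma bform_invmx S u v : S^T = S -> S \in unitmx ->
  bform S (invmx S *m u) v = dotv u v.
Proof.
move=> S_sym S_unit.
by rewrite /bform trmx_mul trmx_inv S_sym -!mulmxA (mulmxA (invmx S)) mulVmx ?mul1mx.
Qed.

Lemma qform_hessian (F : 'cV[R]_N -> R) x (Phi : 'cV[R]_N -> 'cV[R]_N -> R) :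
  (forall w a u v, Phi (a *: u + v) w = a * Phi u w + Phi v w) ->
  (forall u a v w, Phi u (a *: v + w) = a * Phi u v + Phi u w) ->
  (forall v w, 'D_w ('D_v F) x = Phi v w) ->
  forall v, qform (hessian F x) v = Phi v v.
Proof.
have expand (l : 'cV[R]_N -> R) : (forall a u v, l (a *: u + v) = a * l u + l v) ->
    forall v, l v = \sum_i v i 0 * l (delta_mx i 0).
  move=> l_lin v; have l0 : l 0 = 0.
    by have := l_lin (-1) 0 0; rewrite scaler0 addr0 mulN1r addNr.
  have lD : {morph l : u w / u + w} by move=> u w; rewrite -{1}[u]scale1r l_lin mul1r.
  rewrite {1}(matrix_sum_delta v) (big_morph l lD l0); apply: eq_bigr => i _.
  by rewrite big_ord1 -[_ *: _]addr0 l_lin l0 addr0.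
move=> linl linr D2F v; rewrite /qform mxE (expand (Phi v) (linr v)).
apply: eq_bigr => j _; rewrite (expand (Phi^~ _) (linl _)) mulrC mxE.
by congr (_ * _); apply: eq_bigr => i _; rewrite !mxE D2F.
Qed.

Lemma qform_hessian_cst (c : R) x v : qform (hessian (fun _ => c) x) v = 0.
Proof.
rewrite (@qform_hessian _ _ (fun _ _ => 0)) // => [*|*|u w]; rewrite ?mulr0 ?addr0 //.
have -> : 'D_u (fun=> c) = cst 0 by apply/funext => y; exact: derive_cst.
exact: derive_cst.
Qed.

End BilinearForms.

Section FormDerivatives.
Variables (R : realType) (N : nat).
Implicit Types (S : 'M[R]_N) (u v w x : 'cV[R]_N).

Lemma is_derive_dotv u x v : is_derive x v (dotv u) (dotv u v).
Proof.
apply: is_derive_quadratic_line; exists 0 => h.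
by rewrite dotvDr dotvZr; ring.
Qed.

Lemma is_derive_bforml S x v w : is_derive x w (bform S ^~ v) (bform S w v).
Proof.
apply: is_derive_quadratic_line; exists 0 => h.
by rewrite bformDl bformZl; ring.
Qed.

Lemma is_derive_qform S x v : S^T = S -> is_derive x v (qform S) (2 * bform S x v).
Proof.
move=> S_sym; apply: is_derive_quadratic_line; exists (qform S v) => h.
by rewrite !qformE !(bformDl, bformDr, bformZl, bformZr) (bformC v x S_sym); ring.
Qed.

Lemma continuous_dotv u : continuous (dotv u).
Proof.
move=> x; apply: differentiable_continuous.
have -> : dotv u = \sum_(i < N) (fun y : 'cV[R]_N => u i 0 * y i 0).
  by apply/funext => y; rewrite fct_sumE /dotv mxE; apply: eq_bigr => i _; rewrite mxE.
apply: differentiable_sum => i; apply: differentiableM => //.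
exact: differentiable_coord.
Qed.

End FormDerivatives.

Section RatioDerivatives.
Variables (R : realType) (N : nat) (b : R) (mu : 'cV[R]_N) (Sigma : 'M[R]_N).
Hypothesis Sigma_sym : Sigma^T = Sigma.
Hypothesis Sigma_pd : forall x : 'cV[R]_N, x != 0 -> 0 < qform Sigma x.
Implicit Types (u v w x y : 'cV[R]_N).

Local Notation sq y := (Num.sqrt (qform Sigma y)).

Definition ratio y := (b - dotv mu y) / sq y.

Definition ratio_d1 y v := - dotv mu v / sq y - (b - dotv mu y) * bform Sigma y v / sq y ^+ 3.

Definition ratio_d2 x v w :=
  (dotv mu v * bform Sigma x w + dotv mu w * bform Sigma x v
   - (b - dotv mu x) * bform Sigma w v) / sq x ^+ 3
  + 3 * (b - dotv mu x) * bform Sigma x v * bform Sigma x w / sq x ^+ 5.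

Lemma sqrt_qform_gt0 x : x != 0 -> 0 < sq x.
Proof. by move=> x0; rewrite sqrtr_gt0 Sigma_pd. Qed.

Lemma is_derive_sqrt_qform y v : y != 0 ->
  is_derive y v (fun z => sq z) (bform Sigma y v / sq y).
Proof.
move=> y0; have s0 := sqrt_qform_gt0 y0.
have := is_derive_comp (is_derive_qform y v Sigma_sym) (is_derive1_sqrt (Sigma_pd y0)).
by move/is_derive_eq; apply; field; rewrite gt_eqF.
Qed.

Lemma is_derive_inv_sqrt_qform y v : y != 0 ->
  is_derive y v (fun z => (sq z)^-1) (- bform Sigma y v / sq y ^+ 3).
Proof.
move=> y0; have s0 := sqrt_qform_gt0 y0.
have := is_derive_inv (F := fun z => sq z) (lt0r_neq0 s0) (is_derive_sqrt_qform v y0).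
by move/is_derive_eq; apply; field; rewrite gt_eqF.
Qed.

Lemma is_derive_ratio y v : y != 0 -> is_derive y v ratio (ratio_d1 y v).
Proof.
move=> y0; have s0 := sqrt_qform_gt0 y0.
have := is_deriveM (is_deriveB (is_derive_cst b y v) (is_derive_dotv mu y v))
  (is_derive_inv_sqrt_qform v y0).
by move/is_derive_eq; apply; rewrite /ratio_d1 /GRing.scale /= !fctE; field; rewrite gt_eqF.
Qed.

Lemma is_derive_ratio_d1 x v w : x != 0 -> is_derive x w (ratio_d1 ^~ v) (ratio_d2 x v w).
Proof.
move=> x0; have s0 := sqrt_qform_gt0 x0.
have Dinv := is_derive_inv_sqrt_qform w x0.
have := is_deriveB (is_deriveM (is_derive_cst (- dotv mu v) x w) Dinv)
  (is_deriveM (is_deriveM (is_deriveB (is_derive_cst b x w) (is_derive_dotv mu x w))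
                          (is_derive_bforml Sigma x v w))
              (is_deriveX 3 Dinv)).
have -> : ratio_d1 ^~ v = cst (- dotv mu v) * (fun z => (sq z)^-1)
    - ((cst b - dotv mu) * (bform Sigma ^~ v)) * (fun z => (sq z)^-1) ^+ 3.
  by apply/funext => y; rewrite /ratio_d1 /= !fctE exprVn.
move/is_derive_eq; apply; rewrite /ratio_d2 /GRing.scale /= !fctE.
by field; rewrite gt_eqF.
Qed.

End RatioDerivatives.

Section QuadraticInequalities.
Variable R : realFieldType.

Lemma binary_form_ge0P (A B C : R) :
  (forall x y, 0 <= A * x ^+ 2 + 2 * B * x * y + C * y ^+ 2) <->
  [/\ 0 <= A, 0 <= C & B ^+ 2 <= A * C].
Proof.
split=> [psd | [A0 C0 disc] x y].
  have A0 : 0 <= A by have := psd 1 0; rewrite expr1n expr0n /=; lra.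
  have C0 : 0 <= C by have := psd 0 1; rewrite expr1n expr0n /=; lra.
  split=> //; have [A00|A_neq0] := eqVneq A 0.
    (* with A = 0, the form at (-(1 + C), B) is -(2 + C) B^2 *)
    by have := psd (- (1 + C)) B; rewrite A00; nra.
  (* at (B, -A) the form is A (A C - B^2) *)
  have := psd B (- A); have : 0 < A by rewrite lt_def A_neq0.
  nra.
have [A00|A_neq0] := eqVneq A 0.
  have -> : B = 0 by apply/eqP; rewrite -sqrf_eq0 eq_le sqr_ge0 andbT -(mul0r C) -A00.
  nra.
have : 0 < A by rewrite lt_def A_neq0.
(* A times the form is (A x + B y)^2 + (A C - B^2) y^2 *)
have := sqr_ge0 (A * x + B * y); have : 0 <= A * C - B ^+ 2 by rewrite subr_ge0.
move/mulr_ge0 => /(_ _ (sqr_ge0 y)).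
nra.
Qed.

Definition hess_form (r t al be ga : R) :=
  (r - 1) * (al + t * be) ^+ 2 + t * (2 * al * be + 3 * t * be ^+ 2 - t * ga).

Lemma hess_form_plane (r t a W : R) : 0 < t -> 0 <= W ->
  (forall be la, hess_form r t (a * be + la * W) be (be ^+ 2 + la ^+ 2 * W) <= 0) <->
  a ^+ 2 + W <= (2 - r) * a ^+ 2 - 2 * r * t * a - (r + 1) * t ^+ 2.
Proof.
move=> t0 W0.
set M := (r - 1) * a ^+ 2 + 2 * r * a * t + (r + 1) * t ^+ 2.
set L := (r - 1) * a + r * t.
set C := (r - 1) * W ^+ 2 - t ^+ 2 * W.
have form_eq be la : hess_form r t (a * be + la * W) be (be ^+ 2 + la ^+ 2 * W) =
    - (- M * be ^+ 2 + 2 * - (L * W) * be * la + - C * la ^+ 2).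
  by rewrite /hess_form /M /L /C; ring.
have det_eq : M * C - (L * W) ^+ 2 = - (t ^+ 2 * W * (M + W)).
  by rewrite /M /L /C; ring.
have -> : (a ^+ 2 + W <= (2 - r) * a ^+ 2 - 2 * r * t * a - (r + 1) * t ^+ 2) = (M + W <= 0).
  by rewrite -subr_ge0 -[M + W <= 0]subr_ge0 /M; congr (0 <= _); ring.
transitivity (forall be la, 0 <= - M * be ^+ 2 + 2 * - (L * W) * be * la + - C * la ^+ 2).
  by split=> H be la; have := H be la; rewrite form_eq oppr_le0.
rewrite binary_form_ge0P sqrrN mulrNN !oppr_ge0.
have [W00|Wpos] := eqVneq W 0.
  by rewrite /C W00 !(expr0n, mulr0, mul0r, subr0, addr0) /= lexx; split=> [[] | ?].
have {Wpos}W0 : 0 < W by rewrite lt_def Wpos.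
have tW : 0 < t ^+ 2 * W by rewrite mulr_gt0 ?exprn_gt0.
split=> [[_ _ disc] | MW].
  by rewrite -(pmulr_rle0 _ tW) -oppr_ge0 -det_eq subr_ge0.
have M0 : M < 0 by lra.
have disc : (L * W) ^+ 2 <= M * C.
  by rewrite -subr_ge0 det_eq oppr_ge0 pmulr_rle0.
by split; [lra | nra | exact: disc].
Qed.

End QuadraticInequalities.

Section PlaneReduction.
Variables (R : realType) (N : nat) (mu : 'cV[R]_N) (Sigma : 'M[R]_N) (e : 'cV[R]_N).
Hypothesis Sigma_sym : Sigma^T = Sigma.
Hypothesis Sigma_pd : forall x : 'cV[R]_N, x != 0 -> 0 < qform Sigma x.
Hypothesis e_unit : qform Sigma e = 1.

Local Notation nu := (invmx Sigma *m mu).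
Local Notation nu_perp := (nu - dotv mu e *: e).
Local Notation W := (qform (invmx Sigma) mu - dotv mu e ^+ 2).

Lemma bform_nu v : bform Sigma nu v = dotv mu v.
Proof. exact/bform_invmx/pd_unitmx. Qed.

Lemma bform_unit_nu_perp : bform Sigma e nu_perp = 0.
Proof.
by rewrite bformBr bformZr bformC // bform_nu -qformE e_unit mulr1 subrr.
Qed.

Lemma dotv_nu_perp : dotv mu nu_perp = qform Sigma nu_perp.
Proof. by rewrite qformE bformBl bformZl bform_unit_nu_perp mulr0 subr0 bform_nu. Qed.

Lemma qform_nu_perp : qform Sigma nu_perp = W.
Proof. by rewrite -dotv_nu_perp dotvBr dotvZr /dotv mulmxA. Qed.

Lemma plane_reduction (P : R -> R -> R -> R) :
  (forall al be ga ga', ga <= ga' -> P al be ga' <= P al be ga) ->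
  (forall v, P (dotv mu v) (bform Sigma e v) (qform Sigma v) <= 0) <->
  (forall be la, P (dotv mu e * be + la * W) be (be ^+ 2 + la ^+ 2 * W) <= 0).
Proof.
move=> P_anti; rewrite -qform_nu_perp.
have bform_e_w := bform_unit_nu_perp; have dotv_w := dotv_nu_perp.
have bform_w_e : bform Sigma nu_perp e = 0 by rewrite bformC.
have nu_eq : nu = nu_perp + dotv mu e *: e by rewrite subrK.
set w := nu_perp in bform_e_w bform_w_e dotv_w nu_eq *; clearbody w.
split=> [Pv be la | Pp v].
  have := Pv (be *: e + la *: w).
  rewrite dotvDr !dotvZr dotv_w [qform _ (_ + _)]qformE.
  rewrite !(bformDl, bformDr, bformZl, bformZr) -!qformE e_unit bform_e_w bform_w_e.
  by congr (P _ _ _ <= 0); ring.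
(* compare v with its Sigma-orthogonal projection be *: e + la *: w onto the plane *)
have laW : bform Sigma w v / qform Sigma w * qform Sigma w = bform Sigma w v.
  have [->|w0] := eqVneq w 0; first by rewrite /bform trmx0 !mul0mx mxE !mul0r.
  by rewrite divfK // lt0r_neq0 // Sigma_pd.
set be := bform Sigma e v; set la := bform Sigma w v / qform Sigma w in laW *.
apply: le_trans (Pp be la).
have -> : dotv mu v = dotv mu e * be + la * qform Sigma w.
  by rewrite -bform_nu nu_eq bformDl bformZl laW addrC.
apply: P_anti.
have := qform_ge0 Sigma_pd (v - be *: e - la *: w).
rewrite qformE !(bformBl, bformBr, bformZl, bformZr) -!qformE e_unit bform_e_w bform_w_e.
rewrite (bformC v e Sigma_sym) (bformC v w Sigma_sym) -laW -/be.
nra.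
Qed.

End PlaneReduction.

Section RatioHessian.
Variables (R : realType) (N : nat) (b : R) (mu : 'cV[R]_N) (Sigma : 'M[R]_N).
Hypothesis Sigma_sym : Sigma^T = Sigma.
Hypothesis Sigma_pd : forall x : 'cV[R]_N, x != 0 -> 0 < qform Sigma x.
Implicit Types (u v w x y : 'cV[R]_N).

Local Notation ratio := (ratio b mu Sigma).
Local Notation ratio_d1 := (ratio_d1 b mu Sigma).
Local Notation ratio_d2 := (ratio_d2 b mu Sigma).
Local Notation sq y := (Num.sqrt (qform Sigma y)).

Lemma near_domain x : x != 0 -> 0 < b - dotv mu x ->
  \forall y \near x, y != 0 /\ 0 < b - dotv mu y.
Proof.
move=> x0 ux.
have near_x0 := @cvgr_neq0 _ _ _ _ (nbhs_filter x) id x cvg_id x0.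
have near_ux := cvgr_gt _ (cvgB (cvg_cst b) (@continuous_dotv _ _ mu x)) 0 ux.
near=> y; split; [near: y; exact: near_x0 | near: y; exact: near_ux].
Unshelve. all: by end_near.
Qed.

Lemma ratio_gt0 y : y != 0 -> 0 < b - dotv mu y -> 0 < ratio y.
Proof. by move=> y0 uy; rewrite divr_gt0 // sqrt_qform_gt0. Qed.


Lemma ratio_d1_linear x a u v :
  ratio_d1 x (a *: u + v) = a * ratio_d1 x u + ratio_d1 x v.
Proof. by rewrite /ratio_d1 dotvDr dotvZr bformDr bformZr; ring. Qed.

Lemma ratio_d2_linearl x a u v w :
  ratio_d2 x (a *: u + v) w = a * ratio_d2 x u w + ratio_d2 x v w.
Proof. by rewrite /ratio_d2 !(dotvDr, dotvZr, bformDl, bformDr, bformZl, bformZr); ring. Qed.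

Lemma ratio_d2_linearr x a u v w :
  ratio_d2 x u (a *: v + w) = a * ratio_d2 x u v + ratio_d2 x u w.
Proof. by rewrite /ratio_d2 !(dotvDr, dotvZr, bformDl, bformDr, bformZl, bformZr); ring. Qed.

Lemma qform_hessian_comp_ratio (phi phi' phi'' : R -> R) (r : R) x :
  (forall t : R, 0 < t -> is_derive t 1 phi (phi' t)) ->
  (forall t : R, 0 < t -> is_derive t 1 phi' (phi'' t)) ->
  ratio x * phi'' (ratio x) = (r - 1) * phi' (ratio x) ->
  x != 0 -> 0 < b - dotv mu x -> forall v,
  qform (hessian (phi \o ratio) x) v =
    phi' (ratio x) / (ratio x * qform Sigma x) *
    hess_form r (ratio x) (dotv mu v) (bform Sigma x v / sq x) (qform Sigma v).
Proof.
move=> Dphi Dphi' phi_ode x0 ux v; have s0 := sqrt_qform_gt0 Sigma_pd x0.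
have t0 := ratio_gt0 x0 ux.
rewrite (@qform_hessian _ _ _ _ (fun v w => phi'' (ratio x) * ratio_d1 x w * ratio_d1 x v
                                  + phi' (ratio x) * ratio_d2 x v w)).
- have -> : phi'' (ratio x) = (r - 1) * phi' (ratio x) / ratio x.
    by rewrite -phi_ode [ratio x * _]mulrC mulfK // gt_eqF.
  rewrite /ratio_d1 /ratio_d2 /hess_form /ratio -qformE.
  set s := sq x; rewrite -(sqr_sqrtr (qform_ge0 Sigma_pd x)) -/s.
  by field; rewrite !gt_eqF.
- by move=> w a u u'; rewrite ratio_d1_linear ratio_d2_linearl; ring.
- by move=> u a w w'; rewrite ratio_d1_linear ratio_d2_linearr; ring.
move=> u w; apply: derive2_comp.
- near=> y; have [y0 uy] : y != 0 /\ 0 < b - dotv mu y by near: y; exact: near_domain.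
  by split=> [u'|]; [exact: is_derive_ratio | exact/Dphi/ratio_gt0].
- exact/Dphi'/ratio_gt0.
- exact: is_derive_ratio_d1.
Unshelve. all: by end_near.
Qed.

Lemma hess_form_nonpos_iff (r t : R) x : x != 0 -> 0 < t ->
  (forall v, hess_form r t (dotv mu v) (bform Sigma x v / sq x) (qform Sigma v) <= 0) <->
  qform (invmx Sigma) mu <= (2 - r) * (dotv mu x / sq x) ^+ 2
                             - 2 * r * t * (dotv mu x / sq x) - (r + 1) * t ^+ 2.
Proof.
move=> x0 t0; have s0 := sqrt_qform_gt0 Sigma_pd x0.
pose e := (sq x)^-1 *: x.
have e_unit : qform Sigma e = 1.
  rewrite qformE bformZl bformZr -qformE.
  set s := sq x; rewrite -(sqr_sqrtr (qform_ge0 Sigma_pd x)) -/s.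
  by field; rewrite gt_eqF.
have hess_form_anti al be ga ga' : ga <= ga' -> hess_form r t al be ga' <= hess_form r t al be ga.
  move=> le_ga; rewrite -subr_ge0.
  have -> : hess_form r t al be ga - hess_form r t al be ga' = t ^+ 2 * (ga' - ga).
    by rewrite /hess_form; ring.
  by rewrite mulr_ge0 ?sqr_ge0 ?subr_ge0.
have W0 : 0 <= qform (invmx Sigma) mu - dotv mu e ^+ 2.
  by rewrite -(qform_nu_perp mu Sigma_sym Sigma_pd e_unit) qform_ge0.
have := plane_reduction mu Sigma_sym Sigma_pd e_unit hess_form_anti.
have dotv_e : dotv mu e = dotv mu x / sq x by rewrite dotvZr mulrC.
have bform_e v : bform Sigma e v = bform Sigma x v / sq x by rewrite bformZl mulrC.
rewrite (hess_form_plane _ _ t0 W0) addrC subrK dotv_e => <-.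
by split=> H v; have := H v; rewrite bform_e.
Qed.

Lemma sqr_div_sqrt_qform c x : (c / sq x) ^+ 2 = c ^+ 2 / qform Sigma x.
Proof. by rewrite expr_div_n sqr_sqrtr // qform_ge0. Qed.

Lemma convex_pow_ratio_iff (r : R) x : r != 0 -> x != 0 -> 0 < b - dotv mu x ->
  psd (hessian (fun y => Num.sg (- r) * ratio y `^ r) x) <->
  qform (invmx Sigma) mu <= (2 - r) * (dotv mu x / sq x) ^+ 2
      - 2 * r * ratio x * (dotv mu x / sq x) - (r + 1) * ratio x ^+ 2.
Proof.
move=> r0 x0 ux; have t0 := ratio_gt0 x0 ux.
pose phi' t := Num.sg (- r) * (r * t `^ (r - 1)).
pose phi'' t := Num.sg (- r) * (r * ((r - 1) * t `^ (r - 1 - 1))).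
have Dphi (t : R) : 0 < t -> is_derive t 1 (fun t => Num.sg (- r) * t `^ r) (phi' t).
  by move=> t_gt0; apply: is_deriveZ; exact: is_derive1_powR.
have Dphi' (t : R) : 0 < t -> is_derive t 1 phi' (phi'' t).
  by move=> t_gt0; apply: is_deriveZ; apply: is_deriveZ; exact: is_derive1_powR.
have ode : ratio x * phi'' (ratio x) = (r - 1) * phi' (ratio x).
  rewrite /phi' /phi'' powRB ?(gt_eqF t0, implybT) // powRr1 ?ltW //.
  by field; rewrite gt_eqF.
have coef_lt0 : phi' (ratio x) / (ratio x * qform Sigma x) < 0.
  rewrite /phi' sgrN mulNr mulrA -normrEsg mulNr oppr_lt0.
  by apply: divr_gt0; apply: mulr_gt0; rewrite ?normr_gt0 ?powR_gt0 ?Sigma_pd.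
rewrite -hess_form_nonpos_iff //.
have hess := qform_hessian_comp_ratio Dphi Dphi' ode x0 ux.
by split=> H v; [move: (H v) | ]; rewrite /qform -/(qform _ _) hess nmulr_rge0.
Qed.

Lemma concave_ln_ratio_iff x : x != 0 -> 0 < b - dotv mu x ->
  nsd (hessian (fun y => ln (ratio y)) x) <->
  qform (invmx Sigma) mu <= 2 * (dotv mu x / sq x) ^+ 2 - ratio x ^+ 2.
Proof.
move=> x0 ux; have t0 := ratio_gt0 x0 ux.
have Dln (t : R) : 0 < t -> is_derive t 1 (@ln R) t^-1 := @is_derive1_ln R t.
have Dinv (t : R) : 0 < t -> is_derive t 1 GRing.inv (- 1 / t ^+ 2).
  by move=> t_gt0; apply: (is_derive_inv (F := id)) => //; rewrite gt_eqF.
have ode : ratio x * (- 1 / ratio x ^+ 2) = (0 - 1) * (ratio x)^-1.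
  by field; rewrite gt_eqF.
have coef_gt0 : (ratio x)^-1 / (ratio x * qform Sigma x) > 0.
  by apply: divr_gt0; rewrite ?invr_gt0 //; apply: mulr_gt0; rewrite ?Sigma_pd.
have -> : 2 * (dotv mu x / sq x) ^+ 2 - ratio x ^+ 2 = (2 - 0) * (dotv mu x / sq x) ^+ 2
    - 2 * 0 * ratio x * (dotv mu x / sq x) - (0 + 1) * ratio x ^+ 2 by ring.
rewrite -hess_form_nonpos_iff //.
have hess := qform_hessian_comp_ratio Dln Dinv ode x0 ux.
by split=> H v; [move: (H v) | ]; rewrite /qform -/(qform _ _) hess pmulr_rle0.
Qed.

End RatioHessian.

Theorem lemma2p3 (R : realType) (N : nat) (r b : R) (mu : 'cV[R]_N)
    (Sigma : 'M[R]_N)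
    (Hsym : Sigma^T = Sigma)
    (Hpd : forall x : 'cV[R]_N, x != 0 -> 0 < qform Sigma x) :
  let E := [set x : 'cV[R]_N | x != 0 /\ 0 < b - dotv mu x] in
  let f := fun x : 'cV[R]_N =>
             ((b - dotv mu x) / Num.sqrt (qform Sigma x)) `^ r in
  let theta := fun x : 'cV[R]_N => (b - dotv mu x) ^+ 2 / qform Sigma x in
  (r = 0 -> hess_locally_concave f E) /\
  (r != 0 ->
     (hess_locally_convex (fun x => Num.sg (- r) * f x) E <->
      (forall x, E x ->
         qform (invmx Sigma) mu <=
           (2 - r) * ((dotv mu x) ^+ 2 / qform Sigma x)
           - 2 * r * Num.sqrt (theta x) * (dotv mu x / Num.sqrt (qform Sigma x))
           - (r + 1) * theta x))) /\
  (hess_locally_concave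
     (fun x => ln ((b - dotv mu x) / Num.sqrt (qform Sigma x))) E <->
   (forall x, E x ->
      qform (invmx Sigma) mu <= 2 * ((dotv mu x) ^+ 2 / qform Sigma x) - theta x)).
Proof.
move=> E f theta.
have sq_ratio x : theta x = ratio b mu Sigma x ^+ 2 by rewrite sqr_div_sqrt_qform.
have sq_dotv x : dotv mu x ^+ 2 / qform Sigma x = (dotv mu x / Num.sqrt (qform Sigma x)) ^+ 2.
  by rewrite sqr_div_sqrt_qform.
have sqrt_theta x : E x -> Num.sqrt (theta x) = ratio b mu Sigma x.
  by move=> [x0 ux]; rewrite sq_ratio sqrtr_sqr gtr0_norm // ratio_gt0.
split; [|split].
- move=> r0 x _ v; have -> : f = fun=> 1 by apply/funext => y; rewrite /f r0 powRr0.
  by rewrite qform_hessian_cst.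
- move=> r0; split=> H x Ex; have [x0 ux] := Ex.
    by rewrite sqrt_theta // sq_ratio sq_dotv; apply/(convex_pow_ratio_iff Hsym Hpd r0 x0 ux)/H.
  by apply/(convex_pow_ratio_iff Hsym Hpd r0 x0 ux); rewrite -sq_ratio -sqrt_theta // -sq_dotv; exact: H.
split=> H x Ex; have [x0 ux] := Ex.
  by rewrite sq_ratio sq_dotv; apply/(concave_ln_ratio_iff Hsym Hpd x0 ux)/H.
by apply/(concave_ln_ratio_iff Hsym Hpd x0 ux); rewrite -sq_ratio -sq_dotv; exact: H.
Qed.
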